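(* Let $\alpha$ be an implicational formula that is a tautology of Propositional Minimal Implicational Logic. Then there is a proof of $\Rightarrow\alpha$ in the sequent calculus $\mathbf{LJ}^{\rightarrow}$ (without cut) of height at most $|\alpha|\cdot 2^{|\alpha|+1}$.
   Context: Formulas are built from atoms using only $\rightarrow$; $|\alpha|$ denotes the degree of $\alpha$, i.e. the number of occurrences of atomic symbols and connectives in $\alpha$. A formula is a tautology iff it is forced at every world of every Kripke model $\langle U,\preceq,\mathcal V\rangle$ ($\preceq$ a partial order, $\mathcal V$ monotone; $\alpha_1\rightarrow\alpha_2$ forced at $i$ iff for all $j\succeq i$, if $\alpha_1$ forced at $j$ then $\alpha_2$ forced at $j$). $\mathbf{LJ}^{\rightarrow}$ has sequents $\Delta\Rightarrow\gamma$ with exactly one formula on the right and rules: axiom $\Delta,\gamma\Rightarrow\gamma$; weakening, contraction and exchange on the left; $\rightarrow$-right: from $\Delta,\alpha\Rightarrow\beta$ infer $\Delta\Rightarrow\alpha\rightarrow\beta$; $\rightarrow$-left: from $\Delta,\alpha\rightarrow\beta\Rightarrow\alpha$ and $\Delta,\alpha\rightarrow\beta,\beta\Rightarrow\gamma$ infer $\Delta,\alpha\rightarrow\beta\Rightarrow\gamma$. *)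

From Stdlib Require Import List Arith.
Import ListNotations.

Inductive form : Type :=
| Atom : nat -> form
| Imp : form -> form -> form.

Fixpoint degree (a : form) : nat :=
  match a with
  | Atom _ => 1
  | Imp a1 a2 => degree a1 + degree a2 + 1
  end.

Fixpoint forces {U : Type} (le : U -> U -> Prop) (V : U -> nat -> Prop)
    (i : U) (a : form) : Prop :=
  match a with
  | Atom n => V i n
  | Imp a1 a2 => forall j, le i j -> forces le V j a1 -> forces le V j a2
  end.

Definition partial_order {U : Type} (le : U -> U -> Prop) : Prop :=
  (forall x, le x x) /\
  (forall x y z, le x y -> le y z -> le x z) /\
  (forall x y, le x y -> le y x -> x = y).

Definition monotone_val {U : Type} (le : U -> U -> Prop) (V : U -> nat -> Prop) : Prop :=
  forall i j n, le i j -> V i n -> V j n.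

Definition tautology (a : form) : Prop :=
  forall (U : Type) (le : U -> U -> Prop) (V : U -> nat -> Prop),
    partial_order le -> monotone_val le V -> forall i : U, forces le V i a.

(* deriv D g h : there is a cut-free LJ-> derivation of D => g of height h,
   where height = number of sequents on the longest branch (an axiom has height 1).
   Antecedents are lists; "D, x" is D ++ [x]. *)
Inductive deriv : list form -> form -> nat -> Prop :=
| d_ax : forall D g, deriv (D ++ [g]) g 1
| d_weak : forall D d g h, deriv D g h -> deriv (D ++ [d]) g (S h)
| d_contr : forall D d g h, deriv (D ++ [d; d]) g h -> deriv (D ++ [d]) g (S h)
| d_exch : forall D1 D2 d1 d2 g h,
    deriv (D1 ++ [d1; d2] ++ D2) g h -> deriv (D1 ++ [d2; d1] ++ D2) g (S h)
| d_impR : forall D a b h, deriv (D ++ [a]) b h -> deriv D (Imp a b) (S h)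
| d_impL : forall D a b g h1 h2,
    deriv (D ++ [Imp a b]) a h1 ->
    deriv (D ++ [Imp a b; b]) g h2 ->
    deriv (D ++ [Imp a b]) g (S (Nat.max h1 h2)).

(* Work in a set-based calculus whose contexts are sets of subformulas of
   alpha.  It is complete for Kripke semantics: if G => g is not derivable,
   then saturating G inside the subformulas yields a world of the canonical
   model (saturated sets of subformulas, ordered by inclusion) that does not
   force g.  Derivations can be compressed: in a fixed context G, the
   formulas derivable in at most i rounds of bottom-up proof search form an
   increasing chain of subsets of the N = |alpha| subformulas, so it becomes
   stationary after N rounds; premises living in a strictly larger context
   are handled by induction on the number of subformulas missing from G.
   Hence alpha has a set-based derivation of height (N + 1) N.  Replaying it
   with lists needs at most N + 1 structural steps per rule, giving height
   N (N + 1)^2 <= N 2^(N + 1). *)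

From Stdlib Require Import List Arith Lia Permutation.
From Stdlib Require Import Classical FunctionalExtensionality PropExtensionality ProofIrrelevance.
Import ListNotations.

Fixpoint subforms (a : form) : list form :=
  match a with
  | Atom n => [Atom n]
  | Imp a1 a2 => Imp a1 a2 :: subforms a1 ++ subforms a2
  end.

Lemma length_subforms a : length (subforms a) = degree a.
Proof. induction a; simpl; rewrite ?length_app; lia. Qed.

Lemma subforms_refl a : In a (subforms a).
Proof. destruct a; simpl; auto. Qed.

Lemma subforms_trans a b : In b (subforms a) -> incl (subforms b) (subforms a).
Proof.
  induction a as [n|a1 IH1 a2 IH2]; simpl; intros Hb.
  - destruct Hb as [<-|[]]. apply incl_refl.
  - destruct Hb as [<-|Hb]; [apply incl_refl|].
    intros x Hx. right. apply in_or_app.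
    apply in_app_or in Hb as [Hb|Hb]; [left; apply IH1|right; apply IH2]; auto.
Qed.

Definition subform_closed (l : list form) : Prop :=
  forall a b, In (Imp a b) l -> In a l /\ In b l.

Lemma subforms_closed a : subform_closed (subforms a).
Proof.
  intros b c Hbc. apply subforms_trans in Hbc.
  split; apply Hbc; simpl; right; apply in_or_app; [left|right]; apply subforms_refl.
Qed.

Lemma degree_ne_2 a : degree a <> 2.
Proof. destruct a as [n|[m|a1 a2] [n|b1 b2]]; simpl; lia. Qed.

Lemma sq_succ_le_pow2 n : n <> 2 -> (n + 1) * (n + 1) <= 2 ^ (n + 1).
Proof.
  intros Hn. destruct (le_lt_dec n 2) as [Hle|Hlt].
  - destruct n as [|[|[|]]]; simpl; lia.
  - induction Hlt as [|m Hm IH]; [simpl; lia|].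
    rewrite Nat.add_succ_l, Nat.pow_succ_r'. nia.
Qed.

Section Iteration.

Context {A : Type}.
Variable F : (A -> Prop) -> A -> Prop.
Hypothesis F_mono : forall X Y : A -> Prop, (forall x, X x -> Y x) -> forall x, F X x -> F Y x.

Fixpoint iter (i : nat) : A -> Prop :=
  match i with
  | 0 => fun _ => False
  | S i => F (iter i)
  end.

Lemma iter_succ i x : iter i x -> iter (S i) x.
Proof.
  revert x; induction i as [|i IH]; simpl; [tauto|].
  intros x. apply F_mono, IH.
Qed.

Lemma iter_le i j x : i <= j -> iter i x -> iter j x.
Proof. induction 1; auto using iter_succ. Qed.

Lemma iter_stable k : (forall x, iter (S k) x -> iter k x) ->
  forall j x, iter j x -> iter k x.
Proof.
  intros Hfix.
  assert (Hbeyond : forall j x, iter (k + j) x -> iter k x).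
  { induction j as [|j IH]; intros x; rewrite ?Nat.add_0_r; auto.
    rewrite Nat.add_succ_r. intros Hx. apply Hfix. exact (F_mono _ _ IH x Hx). }
  intros j x Hx. destruct (le_lt_dec j k).
  - apply (iter_le j); auto.
  - apply (Hbeyond (j - k)). replace (k + (j - k)) with j by lia. exact Hx.
Qed.

Lemma iter_strict_chain k :
  (forall j, j < k -> exists x, iter (S j) x /\ ~ iter j x) ->
  exists L, NoDup L /\ length L = k /\ forall x, In x L -> iter k x.
Proof.
  induction k as [|k IH]; intros Hgrow.
  - exists []. repeat split; [constructor|contradiction].
  - destruct IH as [L [HL [Hlen HLk]]]; [intros j Hj; apply Hgrow; lia|].
    destruct (Hgrow k (Nat.lt_succ_diag_r k)) as [x [Hx Hnx]].
    exists (x :: L). repeat split.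
    + constructor; auto.
    + simpl; lia.
    + intros y [<-|Hy]; auto using iter_succ.
Qed.

Variable l : list A.
Hypothesis F_bounded : forall X x, F X x -> In x l.

Lemma iter_length_bound i x : iter i x -> iter (length l) x.
Proof.
  destruct (classic (exists j, j <= length l /\ forall y, iter (S j) y -> iter j y))
    as [[j [Hj Hfix]]|Hgrow].
  - intros Hx. apply (iter_le j); auto. exact (iter_stable j Hfix i x Hx).
  - exfalso.
    destruct (iter_strict_chain (S (length l))) as [L [HL [Hlen HLl]]].
    + intros j Hj. apply NNPP. intros Hno. apply Hgrow. exists j. split; [lia|].
      intros y Hy. apply NNPP. intros Hny. apply Hno. eauto.
    + assert (length L <= length l); [|lia].
      apply NoDup_incl_length; auto. intros y Hy. exact (F_bounded _ _ (HLl y Hy)).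
Qed.

End Iteration.

Definition extend (G : form -> Prop) (a : form) : form -> Prop := fun x => G x \/ x = a.

Definition elems (L : list form) : form -> Prop := fun x => In x L.

Lemma extend_absorb G a : G a -> extend G a = G.
Proof.
  intros Ga. extensionality x. apply propositional_extensionality.
  unfold extend. split; [intros [Hx| ->]|]; auto.
Qed.

Lemma extend_elems L a : extend (elems L) a = elems (L ++ [a]).
Proof.
  extensionality x. apply propositional_extensionality.
  unfold extend, elems. rewrite in_app_iff. simpl. intuition.
Qed.

Lemma elems_perm L L' : Permutation L L' -> elems L = elems L'.
Proof.
  intros HP. extensionality x. apply propositional_extensionality.
  split; apply Permutation_in; auto using Permutation_sym.
Qed.

(* [setderiv G g h]: the sequent G => g, with G a set, has a cut-free
   derivation of height at most h (no structural rules are needed). *)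
Inductive setderiv : (form -> Prop) -> form -> nat -> Prop :=
| sd_ax G g h : G g -> setderiv G g (S h)
| sd_impR G a b h : setderiv (extend G a) b h -> setderiv G (Imp a b) (S h)
| sd_impL G a b g h :
    G (Imp a b) -> setderiv G a h -> setderiv (extend G b) g h -> setderiv G g (S h).

Definition provable (G : form -> Prop) (g : form) : Prop := exists h, setderiv G g h.

Lemma setderiv_le G g h h' : setderiv G g h -> h <= h' -> setderiv G g h'.
Proof.
  intros Hd; revert h'.
  induction Hd; intros h' Hle; destruct h' as [|h']; try lia.
  - now apply sd_ax.
  - apply sd_impR, IHHd. lia.
  - eapply sd_impL; eauto; [apply IHHd1|apply IHHd2]; lia.
Qed.

Lemma deriv_weaken_app E : forall D g h, deriv D g h -> deriv (D ++ E) g (h + length E).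
Proof.
  induction E as [|d E IH] using rev_ind; intros D g h Hd.
  - rewrite app_nil_r, Nat.add_0_r. exact Hd.
  - rewrite app_assoc, length_app, Nat.add_assoc, Nat.add_1_r.
    apply d_weak, IH, Hd.
Qed.

Lemma deriv_move_last L2 : forall L1 x g h,
  deriv (L1 ++ L2 ++ [x]) g h -> deriv (L1 ++ x :: L2) g (h + length L2).
Proof.
  induction L2 as [|y L2 IH]; intros L1 x g h Hd; simpl in *.
  - rewrite Nat.add_0_r. exact Hd.
  - rewrite Nat.add_succ_r.
    change (L1 ++ x :: y :: L2) with (L1 ++ [x; y] ++ L2). apply d_exch.
    replace (L1 ++ [y; x] ++ L2) with ((L1 ++ [y]) ++ x :: L2)
      by (rewrite <- app_assoc; reflexivity).
    apply IH. rewrite <- app_assoc. exact Hd.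
Qed.

Lemma NoDup_snoc (L : list form) a : NoDup L -> ~ In a L -> NoDup (L ++ [a]).
Proof.
  intros HL Ha. apply Permutation_NoDup with (a :: L).
  - apply Permutation_cons_append.
  - now constructor.
Qed.

Section Subformulas.

Variable l : list form.
Hypothesis l_closed : subform_closed l.

(* Each set-based rule costs at most |l| + 1 list-based steps: the exchanges
   bringing the principal formula to the end, and one weakening. *)
Lemma deriv_of_setderiv G g h : setderiv G g h ->
  forall L, NoDup L -> G = elems L -> incl L l -> In g l ->
  exists h', h' <= S (length l) * h /\ deriv L g h'.
Proof.
  induction 1 as [G g h Hg|G a b h _ IH|G a b g h Hab _ IH1 _ IH2];
    intros L HL -> Hincl Hgl;
    assert (Hlen := NoDup_incl_length HL Hincl).
  - apply in_split in Hg as [L1 [L2 ->]].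
    rewrite length_app in Hlen; simpl in Hlen.
    exists (1 + length L2). split; [nia|].
    replace (L1 ++ g :: L2) with ((L1 ++ [g]) ++ L2) by (rewrite <- app_assoc; reflexivity).
    apply deriv_weaken_app, d_ax.
  - destruct (l_closed a b Hgl) as [Hal Hbl].
    destruct (classic (In a L)) as [HaL|HaL].
    + destruct (IH L HL (extend_absorb _ _ HaL)) as [h1 [Hh1 Hd]]; auto.
      assert (0 < length l) by (destruct l; [destruct Hgl|simpl; lia]).
      exists (S (S h1)). split; [nia|]. apply d_impR, d_weak, Hd.
    + destruct (IH (L ++ [a])) as [h1 [Hh1 Hd]].
      * now apply NoDup_snoc.
      * apply extend_elems.
      * intros x Hx. apply in_app_or in Hx as [Hx|[<-|[]]]; auto.
      * exact Hbl.
      * exists (S h1). split; [nia|]. apply d_impR, Hd.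
  - destruct (l_closed a b (Hincl _ Hab)) as [Hal Hbl].
    apply in_split in Hab as [L1 [L2 ->]].
    rewrite length_app in Hlen; simpl in Hlen.
    set (D := L1 ++ L2).
    assert (HP : Permutation (L1 ++ Imp a b :: L2) (D ++ [Imp a b])).
    { unfold D. rewrite <- app_assoc. apply Permutation_app_head, Permutation_cons_append. }
    assert (HD : NoDup (D ++ [Imp a b])) by (eapply Permutation_NoDup; eauto).
    assert (HDl : incl (D ++ [Imp a b]) l).
    { intros x Hx. apply Hincl. exact (Permutation_in _ (Permutation_sym HP) Hx). }
    rewrite (elems_perm _ _ HP) in IH1, IH2.
    destruct (IH1 _ HD eq_refl HDl Hal) as [h1 [Hh1 Hd1]].
    assert (Hd2 : exists h2, h2 <= S (length l) * h + 1 /\ deriv (D ++ [Imp a b; b]) g h2).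
    { change (D ++ [Imp a b; b]) with (D ++ [Imp a b] ++ [b]). rewrite app_assoc.
      destruct (classic (In b (D ++ [Imp a b]))) as [HbD|HbD].
      - destruct (IH2 _ HD (extend_absorb _ _ HbD) HDl Hgl) as [h2 [Hh2 Hd2]].
        exists (S h2). split; [lia|]. apply d_weak, Hd2.
      - destruct (IH2 ((D ++ [Imp a b]) ++ [b])) as [h2 [Hh2 Hd2]].
        + now apply NoDup_snoc.
        + apply extend_elems.
        + intros x Hx. apply in_app_or in Hx as [Hx|[<-|[]]]; auto.
        + exact Hgl.
        + exists h2. split; [lia|exact Hd2]. }
    destruct Hd2 as [h2 [Hh2 Hd2]].
    exists (S (Nat.max h1 h2) + length L2). split; [nia|].
    apply deriv_move_last. rewrite app_assoc. fold D. apply d_impL; auto.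
Qed.

Definition missing_le (G : form -> Prop) (k : nat) : Prop :=
  forall L, NoDup L -> (forall x, In x L -> In x l /\ ~ G x) -> length L <= k.

Lemma missing_le_length G : missing_le G (length l).
Proof.
  intros L HL HLl. apply NoDup_incl_length; auto. intros x Hx. apply HLl, Hx.
Qed.

Lemma missing_le_extend G k a : missing_le G k -> In a l -> ~ G a ->
  exists k', k = S k' /\ missing_le (extend G a) k'.
Proof.
  intros Hk Hal Ha. destruct k as [|k].
  - exfalso. assert (length [a] <= 0); [|simpl in *; lia].
    apply Hk; [repeat constructor; auto|]. intros x [<-|[]]; auto.
  - exists k. split; auto. intros L HL HLl.
    assert (length (a :: L) <= S k); [|simpl in *; lia].
    apply Hk.
    + constructor; auto. intros HaL. apply HLl in HaL. unfold extend in HaL. tauto.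
    + intros x [<-|Hx]; auto. apply HLl in Hx. unfold extend in Hx. tauto.
Qed.

(* If [a] is new, the premise lives in a strictly larger context, where a
   derivation of any height is allowed. *)
Definition premise (G X : form -> Prop) (a y : form) : Prop :=
  (G a /\ X y) \/ (~ G a /\ provable (extend G a) y).

(* One round of bottom-up proof search in the context [G], from the set [X]
   of formulas already found derivable in [G]. *)
Definition search_step (G X : form -> Prop) (g : form) : Prop :=
  In g l /\
  (G g \/
   (exists a b, g = Imp a b /\ premise G X a b) \/
   (exists a b, G (Imp a b) /\ X a /\ premise G X b g)).

Lemma search_step_mono G (X Y : form -> Prop) :
  (forall x, X x -> Y x) -> forall x, search_step G X x -> search_step G Y x.
Proof. unfold search_step, premise. firstorder. Qed.

Lemma setderiv_of_iter G k (G_sub : forall x, G x -> In x l)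
  (Hnew : forall a y, In a l -> ~ G a -> In y l -> provable (extend G a) y ->
     setderiv (extend G a) y (k * length l)) :
  forall i x, iter (search_step G) i x -> setderiv G x (k * length l + i).
Proof.
  induction i as [|i IH]; simpl; [contradiction|]. intros x [Hxl Hx].
  assert (Hprem : forall a y, In a l -> In y l -> premise G (iter (search_step G) i) a y ->
            setderiv (extend G a) y (k * length l + i)).
  { intros a y Hal Hyl [[Ga Hy]|[Ga Hy]].
    - rewrite extend_absorb by exact Ga. auto.
    - apply setderiv_le with (k * length l); [auto|lia]. }
  rewrite Nat.add_succ_r.
  destruct Hx as [Gx|[[a [b [-> Hb]]]|[a [b [Gab [Ha Hg]]]]]].
  - now apply sd_ax.
  - destruct (l_closed a b Hxl). apply sd_impR, Hprem; auto.
  - destruct (l_closed a b (G_sub _ Gab)). eapply sd_impL; eauto.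
Qed.

Lemma premise_of_extend G a y h : setderiv (extend G a) y h ->
  iter (search_step (extend G a)) h y -> premise G (iter (search_step G) h) a y.
Proof.
  intros Hd Hi. destruct (classic (G a)) as [Ga|Ga].
  - left. rewrite (extend_absorb G a Ga) in Hi. auto.
  - right. split; [auto|exists h; auto].
Qed.

Lemma iter_of_setderiv : forall G g h, setderiv G g h ->
  (forall x, G x -> In x l) -> In g l -> iter (search_step G) h g.
Proof.
  induction 1 as [G g h Hg|G a b h Hd IH|G a b g h Hab Hda IHa Hdg IHg];
    intros HG Hgl; simpl; split; auto.
  - destruct (l_closed a b Hgl) as [Hal Hbl].
    right; left. exists a, b. split; auto.
    apply premise_of_extend; auto. apply IH; auto.
    intros x [Hx| ->]; auto.
  - destruct (l_closed a b (HG _ Hab)) as [Hal Hbl].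
    right; right. exists a, b. repeat split; auto.
    apply premise_of_extend; auto. apply IHg; auto.
    intros x [Hx| ->]; auto.
Qed.

Lemma setderiv_compress_step G k :
  (forall x, G x -> In x l) ->
  (forall a y, In a l -> ~ G a -> In y l -> provable (extend G a) y ->
     setderiv (extend G a) y (k * length l)) ->
  forall g, In g l -> provable G g -> setderiv G g (S k * length l).
Proof.
  intros HG Hnew g Hgl [h Hd].
  replace (S k * length l) with (k * length l + length l) by (simpl; lia).
  apply setderiv_of_iter; auto.
  apply (iter_length_bound _ (search_step_mono G) l (fun X x Hx => proj1 Hx) h).
  now apply iter_of_setderiv.
Qed.

Lemma setderiv_compress k : forall G,
  (forall x, G x -> In x l) -> missing_le G k ->
  forall g, In g l -> provable G g -> setderiv G g (S k * length l).
Proof.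
  induction k as [|k IH]; intros G HG Hk; apply setderiv_compress_step; auto;
    intros a y Hal Ga; destruct (missing_le_extend G _ a Hk Hal Ga) as [k' [Hkk' Hk']];
    try discriminate.
  injection Hkk' as <-. apply IH; auto. intros x [Hx| ->]; auto.
Qed.

Definition saturated (D : form -> Prop) : Prop :=
  forall a b, D (Imp a b) -> provable D a -> D b.

Lemma saturate k : forall G g,
  (forall x, G x -> In x l) -> missing_le G k -> ~ provable G g ->
  exists D, (forall x, G x -> D x) /\ (forall x, D x -> In x l) /\
    saturated D /\ ~ provable D g.
Proof.
  induction k as [|k IH]; intros G g HG Hk Hg;
    (destruct (classic (saturated G)) as [HGs|HGs]; [exists G; auto|]);
    apply not_all_ex_not in HGs as [a HGs]; apply not_all_ex_not in HGs as [b HGs];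
    apply imply_to_and in HGs as [Gab HGs]; apply imply_to_and in HGs as [[h1 Ha] Gb];
    destruct (l_closed a b (HG _ Gab)) as [_ Hbl];
    destruct (missing_le_extend G _ b Hk Hbl Gb) as [k' [Hkk' Hk']]; try discriminate.
  injection Hkk' as <-.
  destruct (IH (extend G b) g) as [D [HGD [HDl [HDs HDg]]]]; auto.
  - intros x [Hx| ->]; auto.
  - intros [h2 Hd2]. apply Hg. exists (S (Nat.max h1 h2)).
    apply sd_impL with a b; auto; eapply setderiv_le; eauto; lia.
  - exists D. repeat split; auto. intros x Hx. apply HGD. now left.
Qed.

Definition world : Type :=
  { D : form -> Prop | (forall x, D x -> In x l) /\ saturated D }.

Definition world_le (w1 w2 : world) : Prop := forall x, proj1_sig w1 x -> proj1_sig w2 x.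

Definition world_val (w : world) (n : nat) : Prop := proj1_sig w (Atom n).

Lemma world_le_partial_order : partial_order world_le.
Proof.
  unfold world_le. split; [|split]; auto.
  intros [D1 H1] [D2 H2] H12 H21; simpl in *.
  assert (D1 = D2) as <-.
  { extensionality x. apply propositional_extensionality. split; auto. }
  f_equal. apply proof_irrelevance.
Qed.

Lemma world_val_monotone : monotone_val world_le world_val.
Proof. unfold monotone_val, world_le, world_val. auto. Qed.

Lemma world_of_unprovable G g :
  (forall x, G x -> In x l) -> ~ provable G g ->
  exists w : world, (forall x, G x -> proj1_sig w x) /\ ~ provable (proj1_sig w) g.
Proof.
  intros HG Hg.
  destruct (saturate (length l) G g HG (missing_le_length G) Hg) as [D [HGD [HDl [HDs HDg]]]].
  exists (exist _ D (conj HDl HDs)). auto.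
Qed.

Lemma truth_lemma psi : In psi l -> forall w : world,
  (proj1_sig w psi -> forces world_le world_val w psi) /\
  (~ provable (proj1_sig w) psi -> ~ forces world_le world_val w psi).
Proof.
  induction psi as [n|c IHc d IHd]; intros Hpsi w.
  - simpl. unfold world_val. split; auto.
    intros Hn Hw. apply Hn. exists 1. now apply sd_ax.
  - destruct (l_closed c d Hpsi) as [Hc Hd]. split.
    + intros Hw v Hwv Hvc.
      assert (Hpc : provable (proj1_sig v) c).
      { apply NNPP. intros Hnc. exact (proj2 (IHc Hc v) Hnc Hvc). }
      assert (Hvcd : proj1_sig v (Imp c d)) by apply Hwv, Hw.
      apply (IHd Hd v). destruct v as [Dv [HDl HDs]]. exact (HDs c d Hvcd Hpc).
    + intros Hnp Hw.
      destruct (world_of_unprovable (extend (proj1_sig w) c) d) as [v [Hwv Hvd]].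
      * intros x [Hx| ->]; [exact (proj1 (proj2_sig w) x Hx)|exact Hc].
      * intros [h Hh]. apply Hnp. exists (S h). now apply sd_impR.
      * apply (proj2 (IHd Hd v) Hvd). apply Hw.
        -- intros x Hx. apply Hwv. now left.
        -- apply (IHc Hc v), Hwv. now right.
Qed.

Lemma provable_of_tautology g : tautology g -> In g l -> provable (elems []) g.
Proof.
  intros Hg Hgl. apply NNPP. intros Hng.
  destruct (world_of_unprovable (elems []) g) as [w [_ Hw]]; [intros x []|exact Hng|].
  apply (proj2 (truth_lemma g Hgl w) Hw).
  apply Hg; [apply world_le_partial_order|apply world_val_monotone].
Qed.

End Subformulas.

Theorem theorem1 (alpha : form) :
  tautology alpha ->
  exists h, h <= degree alpha * 2 ^ (degree alpha + 1) /\ deriv [] alpha h.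
Proof.
  intros Htaut.
  set (l := subforms alpha).
  assert (Hcl : subform_closed l) by apply subforms_closed.
  assert (Hal : In alpha l) by apply subforms_refl.
  assert (Hshort : setderiv (elems []) alpha (S (length l) * length l)).
  { apply (setderiv_compress l Hcl (length l)); auto.
    - intros x [].
    - apply (missing_le_length l).
    - now apply (provable_of_tautology l). }
  destruct (deriv_of_setderiv l Hcl _ _ _ Hshort [] (NoDup_nil _) eq_refl
              (incl_nil_l l) Hal) as [h [Hh Hd]].
  exists h. split; [|exact Hd].
  unfold l in Hh. rewrite length_subforms in Hh.
  assert (Hpow := sq_succ_le_pow2 _ (degree_ne_2 alpha)).
  nia.
Qed.
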